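(* Let $\epsilon\in(0,1)$, $u_0\in\mathbb{R}$, and $h^*=\epsilon^2$. For every $h\in(0,h^*]$, let $(u_n)_{n\ge0}$ be a sequence of real numbers starting at $u_0$ and satisfying the implicit Euler scheme $$\frac{u_n-u_{n-1}}{h}+\frac{1}{\epsilon^2}\big(u_n^3-u_n\big)=0,\qquad n\ge 1.$$ Then: (i) if $u_0\in\{0,1,-1\}$, then $u_n=\mathrm{sign}(u_0)$ for all $n\ge1$; (ii) if $u_0\notin\{0,1,-1\}$, then $(u_n)$ is monotone and converges to $\mathrm{sign}(u_0)$ as $n\to\infty$.
   Context: The scheme discretizes the ODE $u'(t)+\frac{1}{\epsilon^2}(u^3-u)=0$, $u(0)=u_0$. For $h\le\epsilon^2$ each step equation has a unique real solution $u_n$, so the sequence is uniquely determined. Here $\mathrm{sign}(0)=0$. *)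

From Stdlib Require Import Reals.
Open Scope R_scope.

Definition sign (x : R) : R :=
  if Rlt_dec 0 x then 1 else if Rlt_dec x 0 then -1 else 0.

Definition monotone_seq (u : nat -> R) : Prop :=
  (forall n, u n <= u (S n)) \/ (forall n, u (S n) <= u n).

(** The implicit step u_{n-1} = u_n + r (u_n^3 - u_n), with r = h / eps^2 <= 1, is
    inverted by a strictly increasing map fixing -1, 0 and 1.  Hence the fixed points
    give constant solutions, every other solution stays strictly on one side of each of
    them, and (by oddness of the map) we may assume u_0 > 0.  On (0, oo) the sequence
    then moves monotonically towards 1, and the factorisation
    u_{n-1} - 1 = (u_n - 1) (1 + r u_n (u_n + 1)) makes the distance to 1 contract
    geometrically, with ratio 1 / (1 + r m (m + 1)) for a positive lower bound m. *)

From Stdlib Require Import Reals Lra Lia Psatz.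
Open Scope R_scope.

Lemma sign_pos x : 0 < x -> sign x = 1.
Proof. intros Hx; unfold sign; destruct (Rlt_dec 0 x); [reflexivity | lra]. Qed.

Lemma sign_neg x : x < 0 -> sign x = -1.
Proof.
  intros Hx; unfold sign.
  destruct (Rlt_dec 0 x); [lra|]; destruct (Rlt_dec x 0); [reflexivity | lra].
Qed.

Lemma sign_0 : sign 0 = 0.
Proof. unfold sign; destruct (Rlt_dec 0 0); [lra|]; destruct (Rlt_dec 0 0); [lra | reflexivity]. Qed.

Lemma monotone_seq_of_opp (v : nat -> R) : monotone_seq (fun n => - v n) -> monotone_seq v.
Proof. intros [Hm | Hm]; [right | left]; intro n; specialize (Hm n); lra. Qed.

Lemma Un_cv_of_opp (v : nat -> R) l : Un_cv (fun n => - v n) l -> Un_cv v (- l).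
Proof.
  intros Hcv e He; destruct (CV_opp _ _ Hcv e He) as [N HN].
  exists N; intros n Hn; specialize (HN n Hn); unfold opp_seq in HN.
  rewrite Ropp_involutive in HN; exact HN.
Qed.

Lemma Un_cv_contraction (v : nat -> R) l q :
  0 <= q < 1 -> (forall n, Rabs (v (S n) - l) <= q * Rabs (v n - l)) -> Un_cv v l.
Proof.
  intros Hq Hcontr.
  assert (Hgeom : forall n, Rabs (v n - l) <= Rabs (v 0%nat - l) * q ^ n).
  { induction n as [|n IH]; simpl; [lra|].
    specialize (Hcontr n).
    assert (q * Rabs (v n - l) <= q * (Rabs (v 0%nat - l) * q ^ n))
      by (apply Rmult_le_compat_l; lra).
    lra. }
  intros e He.
  set (K := Rabs (v 0%nat - l)).
  assert (HK : 0 <= K) by apply Rabs_pos.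
  destruct (pow_lt_1_zero q ltac:(rewrite Rabs_right; lra) (e / (K + 1)))
    as [N HN]; [apply Rdiv_lt_0_compat; lra|].
  exists N; intros n Hn; unfold R_dist.
  specialize (HN n Hn); specialize (Hgeom n).
  rewrite Rabs_right in HN by (apply Rle_ge, pow_le; lra).
  assert (Hqn : 0 <= q ^ n) by (apply pow_le; lra).
  assert (q ^ n * (K + 1) < e).
  { apply (Rmult_lt_compat_r (K + 1)) in HN; [|lra].
    unfold Rdiv in HN; rewrite Rmult_assoc, Rinv_l in HN; lra. }
  fold K in Hgeom; nra.
Qed.

(** With r = h / eps^2 the scheme reads u_{n-1} = back_step r u_n. *)
Definition back_step (r x : R) : R := x + r * (x ^ 3 - x).

Lemma implicit_euler_back_step eps h x y :
  eps <> 0 -> h <> 0 ->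
  (x - y) / h + / eps ^ 2 * (x ^ 3 - x) = 0 -> y = back_step (h / eps ^ 2) x.
Proof.
  intros Heps Hh Hstep.
  replace (back_step (h / eps ^ 2) x)
    with (y + h * ((x - y) / h + / eps ^ 2 * (x ^ 3 - x)))
    by (unfold back_step; field; auto).
  rewrite Hstep; ring.
Qed.

Lemma back_step_opp r x : back_step r (- x) = - back_step r x.
Proof. unfold back_step; ring. Qed.

Lemma back_step_fixed r p : p = 0 \/ p = 1 \/ p = -1 -> back_step r p = p.
Proof. unfold back_step; intros [-> | [-> | ->]]; ring. Qed.

Lemma back_step_sub_id r x : back_step r x - x = r * x * (x - 1) * (x + 1).
Proof. unfold back_step; ring. Qed.

Lemma back_step_sub_1 r x : back_step r x - 1 = (x - 1) * (1 + r * x * (x + 1)).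
Proof. unfold back_step; ring. Qed.

Section BackStep.

Variable r : R.
Hypothesis Hr : 0 < r <= 1.

Lemma back_step_increasing x y : x < y -> back_step r x < back_step r y.
Proof.
  intros Hxy.
  assert (Hq : 0 < x * x + x * y + y * y).
  { assert (0 < (y - x) * (y - x)) by (apply Rmult_lt_0_compat; lra).
    pose proof (Rle_0_sqr (x + y)); unfold Rsqr in *; nra. }
  assert (Hfactor : back_step r y - back_step r x
                    = (y - x) * ((1 - r) + r * (x * x + x * y + y * y)))
    by (unfold back_step; ring).
  assert (0 < (y - x) * ((1 - r) + r * (x * x + x * y + y * y)))
    by (apply Rmult_lt_0_compat; nra).
  lra.
Qed.

Lemma back_step_lt_iff x y : x < y <-> back_step r x < back_step r y.
Proof.
  split; [apply back_step_increasing|].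
  intros Hlt; destruct (Rlt_le_dec x y) as [|Hyx]; [assumption|].
  destruct (Rle_lt_or_eq_dec _ _ Hyx) as [Hyx' | ->]; [|lra].
  pose proof (back_step_increasing y x Hyx'); lra.
Qed.

Lemma back_step_inj x y : back_step r x = back_step r y -> x = y.
Proof.
  intros Heq; destruct (Rtotal_order x y) as [Hlt | [-> | Hlt]]; [| reflexivity |].
  - pose proof (back_step_increasing x y Hlt); lra.
  - pose proof (back_step_increasing y x Hlt); lra.
Qed.

Variable v : nat -> R.
Hypothesis Hrec : forall n, v n = back_step r (v (S n)).

Lemma seq_const_at_fixed p : back_step r p = p -> v 0%nat = p -> forall n, v n = p.
Proof.
  intros Hp H0; induction n as [|n IH]; [assumption|].
  apply back_step_inj; rewrite <- Hrec, Hp; assumption.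
Qed.

Lemma seq_side_of_fixed p : back_step r p = p ->
  forall n, (p < v n <-> p < v 0%nat) /\ (v n < p <-> v 0%nat < p).
Proof.
  intros Hp; induction n as [|n IH]; [tauto|].
  rewrite (back_step_lt_iff p), (back_step_lt_iff _ p), Hp, <- Hrec; exact IH.
Qed.

Lemma seq_pos : 0 < v 0%nat -> forall n, 0 < v n.
Proof. intros H0 n; apply (seq_side_of_fixed 0); [apply back_step_fixed|]; tauto. Qed.

Lemma seq_decreasing_above_1 : 1 < v 0%nat -> forall n, v (S n) <= v n.
Proof.
  intros H0 n.
  assert (Hgt : 1 < v (S n)) by (apply (seq_side_of_fixed 1); [apply back_step_fixed|]; tauto).
  pose proof (back_step_sub_id r (v (S n))) as Hstep; rewrite <- Hrec in Hstep.
  assert (0 < r * v (S n) * (v (S n) - 1) * (v (S n) + 1))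
    by (repeat apply Rmult_lt_0_compat; lra).
  lra.
Qed.

Lemma seq_increasing_below_1 : 0 < v 0%nat < 1 -> forall n, v n <= v (S n).
Proof.
  intros H0 n.
  assert (Hlt : v (S n) < 1) by (apply (seq_side_of_fixed 1); [apply back_step_fixed|]; tauto).
  pose proof (seq_pos (proj1 H0) (S n)) as Hpos.
  pose proof (back_step_sub_id r (v (S n))) as Hstep; rewrite <- Hrec in Hstep.
  assert (0 < r * v (S n) * (1 - v (S n)) * (v (S n) + 1))
    by (repeat apply Rmult_lt_0_compat; lra).
  lra.
Qed.

Lemma seq_contraction_to_1 m : 0 < m -> (forall n, m <= v n) ->
  forall n, Rabs (v (S n) - 1) <= / (1 + r * m * (m + 1)) * Rabs (v n - 1).
Proof.
  intros Hm Hbound n.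
  set (c := 1 + r * m * (m + 1)); set (k := 1 + r * v (S n) * (v (S n) + 1)).
  pose proof (Hbound (S n)) as HmS.
  assert (Hc : 0 < c) by (unfold c; nra).
  assert (Hck : c <= k).
  { assert (m * (m + 1) <= v (S n) * (v (S n) + 1)) by nra.
    unfold c, k; nra. }
  pose proof (back_step_sub_1 r (v (S n))) as Hfactor; rewrite <- Hrec in Hfactor.
  rewrite Hfactor, Rabs_mult; fold k; rewrite (Rabs_right k) by lra.
  apply (Rmult_le_reg_l c); [assumption|].
  rewrite <- Rmult_assoc, Rinv_r, Rmult_1_l by lra.
  pose proof (Rabs_pos (v (S n) - 1)); nra.
Qed.

Lemma seq_cv_1 : 0 < v 0%nat -> v 0%nat <> 1 -> monotone_seq v /\ Un_cv v 1.
Proof.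
  intros Hpos Hne1.
  set (m := Rmin (v 0%nat) 1).
  assert (Hm : 0 < m) by (unfold m; apply Rmin_glb_lt; lra).
  assert (Hmono_bound : monotone_seq v /\ forall n, m <= v n).
  { destruct (Rlt_le_dec 1 (v 0%nat)) as [Habove | Hbelow].
    - split; [right; apply seq_decreasing_above_1; assumption|].
      intro n; assert (1 < v n)
        by (apply (seq_side_of_fixed 1); [apply back_step_fixed|]; tauto).
      pose proof (Rmin_r (v 0%nat) 1) as Hmin; fold m in Hmin; lra.
    - assert (Hinc := seq_increasing_below_1 ltac:(lra)).
      split; [left; exact Hinc|].
      intro n; apply Rle_trans with (v 0%nat); [apply Rmin_l|].
      induction n as [|n IH]; [lra | specialize (Hinc n); lra]. }
  destruct Hmono_bound as [Hmono Hbound]; split; [exact Hmono|].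
  apply (Un_cv_contraction v 1 (/ (1 + r * m * (m + 1)))).
  - split; [left; apply Rinv_0_lt_compat; nra|].
    rewrite <- Rinv_1; apply Rinv_lt_contravar; nra.
  - exact (seq_contraction_to_1 m Hm Hbound).
Qed.

End BackStep.

Theorem theorem2p4 (eps u0 h : R) (u : nat -> R) :
  0 < eps < 1 ->
  0 < h <= eps ^ 2 ->
  u 0%nat = u0 ->
  (forall n : nat, (1 <= n)%nat ->
     (u n - u (n - 1)%nat) / h + / eps ^ 2 * (u n ^ 3 - u n) = 0) ->
  ((u0 = 0 \/ u0 = 1 \/ u0 = -1) -> forall n : nat, (1 <= n)%nat -> u n = sign u0) /\
  (~ (u0 = 0 \/ u0 = 1 \/ u0 = -1) -> monotone_seq u /\ Un_cv u (sign u0)).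
Proof.
  intros Heps Hh Hu0 Hscheme.
  set (r := h / eps ^ 2).
  assert (Heps2 : 0 < eps ^ 2) by (apply pow_lt; lra).
  assert (Hr : 0 < r <= 1).
  { split; [apply Rdiv_lt_0_compat; lra|].
    apply (Rmult_le_reg_r (eps ^ 2)); [assumption|].
    unfold r, Rdiv; rewrite Rmult_assoc, Rinv_l; lra. }
  assert (Hrec : forall n, u n = back_step r (u (S n))).
  { intro n; apply implicit_euler_back_step; [lra | lra|].
    specialize (Hscheme (S n) ltac:(lia)); rewrite Nat.sub_1_r in Hscheme; exact Hscheme. }
  split.
  - intros Hfixed n _.
    rewrite (seq_const_at_fixed r Hr u Hrec u0 (back_step_fixed r u0 Hfixed) Hu0).
    symmetry; destruct Hfixed as [-> | [-> | ->]];
      [apply sign_0 | apply sign_pos | apply sign_neg]; lra.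
  - intros Hnot; destruct (Rtotal_order u0 0) as [Hneg | [Hzero | Hpos]]; [| tauto |].
    + assert (Hrec_opp : forall n, - u n = back_step r (- u (S n)))
        by (intro n; rewrite back_step_opp, <- Hrec; reflexivity).
      destruct (seq_cv_1 r Hr (fun n => - u n) Hrec_opp) as [Hmono Hcv]; [lra | lra |].
      rewrite sign_neg by assumption.
      split; [apply monotone_seq_of_opp | apply Un_cv_of_opp]; assumption.
    + rewrite sign_pos by assumption.
      apply (seq_cv_1 r Hr u Hrec); rewrite Hu0; [lra | tauto].
Qed.
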